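(* Consider a forward complete system $\dot x(t)=f(x_t,u(t))$ with delay-free output $y(t)=h_0(x(t))$ as in the context. Let $\alpha:\mathcal X^n\to\mathbb R_{\ge0}$ be continuous with $\alpha(0)=0$. Assume there exist $\beta\in\mathcal{KL}$ and $\rho,\kappa,\gamma\in\mathcal N$ such that for all $\xi\in\mathcal X^n$, $u\in\mathcal M$ and all $t\ge0$, $|y(t)|\le\max\{\beta(\alpha(\xi),\ t/(1+\rho(\|\xi\|_{\mathcal X}))),\ \kappa(\max_{\tau\in[-\theta,t]}|y(\tau)|),\ \gamma(\|u\|)\}$. Then there exists $\beta_1\in\mathcal{KL}$ such that for all $\xi,u$ and all $t\ge0$, $\|y_t\|_{\mathcal X}\le\max\{\beta_1(\tilde\alpha(\xi),\ t/(1+\rho(\|\xi\|_{\mathcal X}))),\ \kappa(\max_{\tau\in[0,t]}\|y_\tau\|_{\mathcal X}),\ \gamma(\|u\|)\}$, where $\tilde\alpha(\xi)=\max\{\alpha(\xi),H(\xi)\}$.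
   Context: Fix $\theta>0$; $\mathcal X^k=C([-\theta,0],\mathbb R^k)$ with norm $\|\xi\|_{\mathcal X}=\max_{s\in[-\theta,0]}|\xi(s)|$; for a continuous $v$ on $[-\theta,b]$, $v_t(s)=v(t+s)$. $\mathcal M$: measurable locally essentially bounded $u:\mathbb R_{\ge0}\to\mathbb R^m$, $\|u\|$ the essential supremum on $[0,\infty)$. Classes: $\mathcal N$ = continuous nondecreasing $\sigma:\mathbb R_{\ge0}\to\mathbb R_{\ge0}$, $\sigma(0)=0$; $\mathcal K$ = strictly increasing ones; $\mathcal{KL}$ = $\beta(s,t)$ of class $\mathcal K$ in $s$ and decreasing to $0$ as $t\to\infty$. $f:\mathcal X^n\times\mathbb R^m\to\mathbb R^n$ is locally Lipschitz and maps bounded sets to bounded sets; $x(\cdot,\xi,u)$ is the unique maximal solution with $x(s)=\xi(s)$ on $[-\theta,0]$; forward complete means these exist for all $t\ge0$. $h_0:\mathbb R^n\to\mathbb R^p$ is continuous with $h_0(0)=0$, and along a solution $y(\tau)=h_0(x(\tau,\xi,u))$ for $\tau\ge-\theta$ (so $y(\tau)=h_0(\xi(\tau))$ on $[-\theta,0]$); $y_t\in\mathcal X^p$ is $y_t(s)=y(t+s)$. $H(\xi)=\max_{s\in[-\theta,0]}|h_0(\xi(s))|=\|y_0\|_{\mathcal X}$. *)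

From HB Require Import structures.
From mathcomp Require Import all_boot all_order all_algebra.
From mathcomp Require Import all_classical all_reals all_analysis.
From mathcomp Require Import ess_sup_inf.
Set Implicit Arguments.
Unset Strict Implicit.
Unset Printing Implicit Defensive.

Import Order.TTheory GRing.Theory Num.Def Num.Theory.
Import numFieldNormedType.Exports.

Local Open Scope classical_set_scope.
Local Open Scope ring_scope.

Section Defs.
Variable R : realType.

Definition vnorm (k : nat) (v : 'rV[R]_k) : R :=
  Num.sqrt (\sum_(i < k) (v ord0 i) ^+ 2).

Definition clamp (theta s : R) : R := Num.min 0 (Num.max (- theta) s).

(* Elements of X^k = C([-theta,0], R^k) are represented by functions
   R -> R^k that are continuous on [-theta,0] and normalized by
   xi = xi o clamp (so they are determined by their values on [-theta,0]). *)
Definition isX (theta : R) (k : nat) (xi : R -> 'rV[R]_k) : Prop :=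
  {within `[- theta, 0], continuous xi} /\ (forall s, xi s = xi (clamp theta s)).

Definition normX (theta : R) (k : nat) (xi : R -> 'rV[R]_k) : R :=
  sup [set vnorm (xi s) | s in `[- theta, 0]].

Definition seg (theta : R) (k : nat) (v : R -> 'rV[R]_k) (t : R) : R -> 'rV[R]_k :=
  fun s => v (t + clamp theta s).

Definition classN (sigma : R -> R) : Prop :=
  {within [set s | 0 <= s], continuous sigma} /\
  (forall s, 0 <= s -> 0 <= sigma s) /\
  (forall a b, 0 <= a -> a <= b -> sigma a <= sigma b) /\
  sigma 0 = 0.

Definition classK (sigma : R -> R) : Prop :=
  classN sigma /\ (forall a b, 0 <= a -> a < b -> sigma a < sigma b).

Definition classKL (beta : R -> R -> R) : Prop :=
  (forall t, 0 <= t -> classK (fun s => beta s t)) /\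
  (forall s, 0 <= s -> forall a b, 0 <= a -> a <= b -> beta s b <= beta s a) /\
  (forall s, 0 <= s -> beta s t @[t --> +oo] --> 0).

Definition inM (m : nat) (u : R -> 'rV[R]_m) : Prop :=
  (forall j : 'I_m, measurable_fun (`[0, +oo[%classic : set R) (fun t => u t ord0 j)) /\
  (forall T, 0 <= T -> exists M : R,
     {ae (@lebesgue_measure R), forall t, 0 <= t <= T -> vnorm (u t) <= M}).

Definition normM (m : nat) (u : R -> 'rV[R]_m) : \bar R :=
  ess_sup (@lebesgue_measure R)
    (fun t => (if 0 <= t then vnorm (u t) else 0)%:E).

Definition loc_lipschitz (theta : R) (n m : nat)
    (f : (R -> 'rV[R]_n) -> 'rV[R]_m -> 'rV[R]_n) : Prop :=
  forall xi0 v0, isX theta xi0 ->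
  exists r : R, exists L : R, 0 < r /\
    forall xi1 xi2 v1 v2, isX theta xi1 -> isX theta xi2 ->
      normX theta (fun s => xi1 s - xi0 s) < r ->
      normX theta (fun s => xi2 s - xi0 s) < r ->
      vnorm (v1 - v0) < r -> vnorm (v2 - v0) < r ->
      vnorm (f xi1 v1 - f xi2 v2) <=
        L * (normX theta (fun s => xi1 s - xi2 s) + vnorm (v1 - v2)).

Definition bounded_on_bounded (theta : R) (n m : nat)
    (f : (R -> 'rV[R]_n) -> 'rV[R]_m -> 'rV[R]_n) : Prop :=
  forall B : R, exists C : R, forall xi v, isX theta xi ->
    normX theta xi <= B -> vnorm v <= B -> vnorm (f xi v) <= C.

Definition Icc0 (t : R) : set R := `[0, t]%classic.

(* x is a solution on [-theta, +oo) of x'(t) = f(x_t, u(t)), x = xi on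
   [-theta,0] (Caratheodory sense: integral equation). *)
Definition isSol (theta : R) (n m : nat)
    (f : (R -> 'rV[R]_n) -> 'rV[R]_m -> 'rV[R]_n)
    (xi : R -> 'rV[R]_n) (u : R -> 'rV[R]_m) (x : R -> 'rV[R]_n) : Prop :=
  {within `[- theta, +oo[, continuous x} /\
  (forall s, - theta <= s <= 0 -> x s = xi s) /\
  (forall t, 0 <= t -> forall i : 'I_n,
     (@lebesgue_measure R).-integrable (`[0, t]%classic : set R)
        (fun s => (f (seg theta x s) (u s) ord0 i)%:E) /\
     (x t ord0 i)%:E = (xi 0 ord0 i)%:E +
        (\int[@lebesgue_measure R]_(s in Icc0 t)
            (f (seg theta x s) (u s) ord0 i)%:E)%E).

End Defs.

(* Write c := 1 + rho(||xi||) >= 1 and fix s in [-theta, 0].  If t + s >= 0, the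
   hypothesis at time t + s applies: (t + s)/c >= t/c - theta, so its decay term is
   at most beta(alpha~(xi), max(0, t/c - theta)), and the sup of |y| over
   [-theta, t + s] is covered by the segments y_tau, tau in [0, t].  If t + s < 0,
   then |y(t + s)| <= H(xi) <= alpha~(xi) while t/c <= t < theta, which the pulse
   alpha~(xi) 1_{t < theta} absorbs.  Hence
   beta1(s, t) = beta(s, max(0, t - theta)) + s 1_{t < theta}, a KL function. *)

From HB Require Import structures.
From mathcomp Require Import all_boot all_order all_algebra.
From mathcomp Require Import all_classical all_reals all_analysis.
From mathcomp Require Import ess_sup_inf.
From mathcomp Require Import lra.

Set Implicit Arguments.
Unset Strict Implicit.
Unset Printing Implicit Defensive.
Import Order.TTheory GRing.Theory Num.Def Num.Theory.
Import numFieldNormedType.Exports.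
Local Open Scope classical_set_scope.
Local Open Scope ring_scope.

Lemma vnorm_ge0 (R : realType) k (v : 'rV[R]_k) : 0 <= vnorm v.
Proof. exact: sqrtr_ge0. Qed.

Lemma continuous_vnorm (R : realType) k : continuous (@vnorm R k).
Proof.
have sum_cont (s : seq 'I_k) :
    continuous (fun v : 'rV[R]_k => \sum_(i <- s) (v ord0 i) ^+ 2).
  elim: s => [|i s IHs] v.
    under eq_fun do rewrite big_nil; exact: cst_continuous.
  under eq_fun do rewrite big_cons expr2.
  apply: continuousD (IHs v).
  by apply: continuousM; exact: coord_continuous.
by move=> v; apply: continuous_comp (sum_cont _ v) (@sqrt_continuous R _).
Qed.

Lemma clamp_id (R : realType) (theta s : R) : - theta <= s <= 0 -> clamp theta s = s.
Proof. by move=> /andP[lo hi]; rewrite /clamp (max_idPr lo); apply/min_idPr. Qed.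

Section SupItv.
Variables (R : realType) (y : R -> R).

Definition sup_itv (a b : R) : R := sup [set y v | v in `[a, b]].

Lemma sup_itv_ub (a b v : R) :
  {within `[a, b], continuous y} -> a <= v <= b -> y v <= sup_itv a b.
Proof.
move=> y_cont vab; have ab : a <= b by case/andP: vab => /le_trans; apply.
apply: ub_le_sup; last by exists v => //; rewrite /= in_itv.
have [c _ c_max] := EVT_max ab y_cont.
by exists (y c) => _ [x xab <-]; exact: c_max.
Qed.

Lemma sup_itv_le (a b M : R) :
  a <= b -> (forall v, a <= v <= b -> y v <= M) -> sup_itv a b <= M.
Proof.
move=> ab yM; apply: ge_sup; first by exists (y a), a => //; rewrite /= in_itv /= lexx.
by move=> _ [v vab <-]; apply: yM; move: vab; rewrite /= in_itv.
Qed.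

End SupItv.

Lemma normX_seg (R : realType) (theta : R) k (Y : R -> 'rV[R]_k) (tau : R) :
  normX theta (seg theta Y tau) = sup_itv (fun v => vnorm (Y v)) (tau - theta) tau.
Proof.
rewrite /normX /sup_itv /seg; congr sup.
apply/seteqP; split => _ [s + <-]; rewrite /= in_itv /= => sI.
- exists (tau + s); last by rewrite clamp_id.
  by rewrite /= in_itv /=; lra.
- exists (s - tau); first by rewrite /= in_itv /=; lra.
  by rewrite clamp_id; [rewrite addrC subrK | lra].
Qed.

Lemma normX_ge0 (R : realType) (theta : R) k (xi : R -> 'rV[R]_k) :
  0 <= theta -> {within `[- theta, 0], continuous xi} -> 0 <= normX theta xi.
Proof.
move=> theta_ge0 xi_cont; apply: le_trans (vnorm_ge0 (xi 0)) _.
apply: (@sup_itv_ub _ (fun s => vnorm (xi s))); last by rewrite lexx andbT oppr_le0.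
have := @within_continuous_comp _ _ _ _ xi _ (fun v _ => continuous_vnorm (x:=v)).
exact.
Qed.

Definition pulse (R : realType) (a s t : R) : R := if t < a then s else 0.

Definition delayKL (R : realType) (beta : R -> R -> R) (a s t : R) : R :=
  beta s (Num.max 0 (t - a)) + pulse a s t.

Lemma classK_addr (R : realType) (f g : R -> R) :
  classK f -> classN g -> classK (fun s => f s + g s).
Proof.
move=> [[f_cont [f_ge0 [f_mono f0]]] f_incr] [g_cont [g_ge0 [g_mono g0]]].
split; [split; [|split; [|split]]|].
- by move=> x; have := continuousD (f_cont x) (g_cont x).
- by move=> s s0; rewrite addr_ge0 ?f_ge0 ?g_ge0.
- by move=> a b a0 ab; rewrite lerD ?f_mono ?g_mono.
- by rewrite f0 g0 addr0.
- by move=> a b a0 ab; rewrite ltr_leD ?f_incr ?g_mono // ltW.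
Qed.

Lemma classN_pulse (R : realType) (a t : R) : classN (fun s => pulse a s t).
Proof.
rewrite /pulse; case: (t < a).
- split; first by apply: continuous_subspaceT => x; exact: cvg_id.
  by split=> // s.
- split; first by apply: continuous_subspaceT => x; exact: cst_continuous.
  by split.
Qed.

Lemma classKL_delay (R : realType) (beta : R -> R -> R) (a : R) :
  classKL beta -> classKL (fun s t => beta s (Num.max 0 (t - a))).
Proof.
move=> [beta_K [beta_decr beta_cvg]]; split; [|split].
- by move=> t _; apply: beta_K; rewrite le_max lexx.
- move=> s s0 t1 t2 _ t12; apply: beta_decr => //; first by rewrite le_max lexx.
  by apply: le_max2 => //; exact: lerB.
- move=> s s0; apply: cvg_comp (beta_cvg s s0).
  apply/cvgryPge => A; near=> t; rewrite le_max; apply/orP; right.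
  by rewrite lerBrDr; near: t; apply: nbhs_pinfty_ge; exact: num_real.
Unshelve. all: by end_near.
Qed.

Lemma classKL_add_pulse (R : realType) (beta : R -> R -> R) (a : R) :
  classKL beta -> classKL (fun s t => beta s t + pulse a s t).
Proof.
move=> [beta_K [beta_decr beta_cvg]]; split; [|split].
- by move=> t t0; exact: classK_addr (beta_K t t0) (classN_pulse a t).
- move=> s s0 t1 t2 t10 t12; apply: lerD; first exact: beta_decr.
  rewrite /pulse; case: ifP => t2a; case: ifP => t1a //.
  by rewrite (le_lt_trans t12 t2a) in t1a.
- move=> s s0; rewrite -[0]addr0; apply: cvgD (beta_cvg s s0) _.
  apply: cvg_near_cst; near=> t; rewrite /pulse ifF //; apply/negbTE.
  by rewrite -leNgt; near: t; apply: nbhs_pinfty_ge; exact: num_real.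
Unshelve. all: by end_near.
Qed.

Lemma classKL_delayKL (R : realType) (beta : R -> R -> R) (a : R) :
  classKL beta -> classKL (delayKL beta a).
Proof. by move=> /(classKL_delay a) /(classKL_add_pulse a). Qed.

Lemma delayKL_ge_delay (R : realType) (beta : R -> R -> R) (a s s' t t' : R) :
  classKL beta -> 0 <= s' <= s -> 0 <= t' -> t - a <= t' ->
  beta s' t' <= delayKL beta a s t.
Proof.
move=> [beta_K [beta_decr _]] /andP[s'0 s's] t'0 tt'.
have s0 := le_trans s'0 s's.
have [[_ [_ [beta_mono _]]] _] := beta_K t' t'0.
apply: le_trans (beta_mono _ _ s'0 s's) _.
have pulse_ge0 : 0 <= pulse a s t by rewrite /pulse; case: ifP.
apply: ler_wpDr pulse_ge0 _; apply: beta_decr; rewrite ?le_max ?lexx //.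
by rewrite ge_max t'0.
Qed.

Lemma delayKL_ge_pulse (R : realType) (beta : R -> R -> R) (a s t : R) :
  classKL beta -> 0 <= s -> t < a -> s <= delayKL beta a s t.
Proof.
move=> [beta_K _] s0 ta; rewrite /delayKL /pulse ta.
have max_ge0 : 0 <= Num.max 0 (t - a) by rewrite le_max lexx.
have [[_ [beta_ge0 _]] _] := beta_K _ max_ge0.
by rewrite lerDr beta_ge0.
Qed.

Section OutputSegments.
Variables (R : realType) (theta : R) (y : R -> R).
Hypotheses (y_ge0 : forall v, 0 <= y v) (y_cont : {within `[- theta, +oo[, continuous y}).

Let y_cont_itv (a b : R) : - theta <= a -> {within `[a, b], continuous y}.
Proof.
move=> a_ge; apply: continuous_subspaceW y_cont => v.
by rewrite /= !in_itv /= => /andP[av _]; rewrite (le_trans a_ge av).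
Qed.

Lemma le_sup_seg (t v : R) : 0 <= theta -> 0 <= t -> - theta <= v <= t ->
  y v <= sup [set sup_itv y (tau - theta) tau | tau in `[0, t]].
Proof.
move=> theta_ge0 t0 /andP[v_lo v_hi].
have [tau tau_in v_in] : exists2 tau, 0 <= tau <= t & tau - theta <= v <= tau.
  by have [v0|v_neg] := leP 0 v; [exists v | exists 0]; apply/andP; split; lra.
have seg_cont : {within `[tau - theta, tau], continuous y}.
  by apply: y_cont_itv; lra.
apply: le_trans (sup_itv_ub seg_cont v_in) _.
apply: ub_le_sup; last by exists tau => //; rewrite /= in_itv.
exists (sup_itv y (- theta) t) => _ [tau' + <-]; rewrite /= in_itv /= => tau'_in.
apply: sup_itv_le => [|v' v'_in]; first lra.
apply: sup_itv_ub; [exact: y_cont_itv | lra].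
Qed.

Lemma sup_itv_le_sup_seg (t tau : R) : 0 <= theta -> 0 <= tau <= t ->
  sup_itv y (- theta) tau <= sup [set sup_itv y (tau' - theta) tau' | tau' in `[0, t]].
Proof.
move=> theta_ge0 tau_in; apply: sup_itv_le => [|v v_in]; first lra.
by apply: le_sup_seg; lra.
Qed.

Lemma sup_seg_le_delayKL (beta : R -> R -> R) (kappa : R -> R) (s r c g : R) :
  (forall v : R, 0 <= v ->
     y v <= Num.max (beta s (v / c)) (Num.max (kappa (sup_itv y (- theta) v)) g)) ->
  0 <= theta -> classKL beta -> classN kappa -> 1 <= c -> 0 <= s <= r ->
  sup_itv y (- theta) 0 <= r ->
  forall t : R, 0 <= t ->
  sup_itv y (t - theta) t <=
    Num.max (delayKL beta theta r (t / c))
      (Num.max (kappa (sup [set sup_itv y (tau - theta) tau | tau in `[0, t]])) g).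
Proof.
move=> y_bound theta_ge0 betaKL [_ [_ [kappa_mono _]]] c1 s_in y_init t t0.
have c0 : 0 < c by apply: lt_le_trans ltr01 c1.
have div_le x : 0 <= x -> x / c <= x by move=> x0; rewrite ler_pdivrMr //; nra.
apply: sup_itv_le => [|v /andP[v_lo v_hi]]; first lra.
have [v0|v_neg] := leP 0 v.
- apply: le_trans (y_bound v v0) _; apply: le_max2; last apply: le_max2 => //.
    apply: delayKL_ge_delay => //; first by rewrite divr_ge0 // ltW.
    have := div_le _ theta_ge0.
    have : (t - theta) / c <= v / c by rewrite ler_pM2r ?invr_gt0.
    by rewrite mulrBl; lra.
  apply: kappa_mono; last by apply: sup_itv_le_sup_seg; lra.
  apply: le_trans (y_ge0 v) _; apply: sup_itv_ub; [exact: y_cont_itv | lra].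
- have tc_lt : t / c < theta by have := div_le _ t0; lra.
  apply: le_trans (_ : r <= _); last by rewrite le_max delayKL_ge_pulse //; lra.
  apply: le_trans y_init; apply: sup_itv_ub; [exact: y_cont_itv | lra].
Qed.

End OutputSegments.

Theorem lemma7p1 (R : realType) (theta : R) (n m p : nat)
  (f : (R -> 'rV[R]_n) -> 'rV[R]_m -> 'rV[R]_n)
  (h0 : 'rV[R]_n -> 'rV[R]_p)
  (phi : (R -> 'rV[R]_n) -> (R -> 'rV[R]_m) -> R -> 'rV[R]_n)
  (alpha : (R -> 'rV[R]_n) -> R)
  (beta : R -> R -> R) (rho kappa gamma : R -> R) :
  0 < theta ->
  loc_lipschitz theta f ->
  bounded_on_bounded theta f ->
  continuous h0 -> h0 0 = 0 ->
  (* forward completeness: phi xi u is the (global) solution *)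
  (forall xi u, isX theta xi -> inM u -> isSol theta f xi u (phi xi u)) ->
  (* alpha : X^n -> R_{>=0} continuous, alpha(0) = 0 *)
  (forall xi, isX theta xi -> 0 <= alpha xi) ->
  (forall xi0, isX theta xi0 -> forall e : R, 0 < e -> exists d : R, 0 < d /\
     forall xi, isX theta xi -> normX theta (fun s => xi s - xi0 s) < d ->
       `|alpha xi - alpha xi0| < e) ->
  alpha (fun _ => 0) = 0 ->
  classKL beta -> classN rho -> classN kappa -> classN gamma ->
  (forall xi u, isX theta xi -> inM u -> (normM u < +oo)%E ->
     forall t, 0 <= t ->
     vnorm (h0 (phi xi u t)) <=
       Num.max (beta (alpha xi) (t / (1 + rho (normX theta xi))))
        (Num.max (kappa (sup [set vnorm (h0 (phi xi u tau)) | tau in `[- theta, t]]))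
                 (gamma (fine (normM u))))) ->
  exists beta1 : R -> R -> R, classKL beta1 /\
  (forall xi u, isX theta xi -> inM u -> (normM u < +oo)%E ->
     forall t, 0 <= t ->
     normX theta (seg theta (fun tau => h0 (phi xi u tau)) t) <=
       Num.max (beta1 (Num.max (alpha xi) (normX theta (fun s => h0 (xi s))))
                      (t / (1 + rho (normX theta xi))))
        (Num.max (kappa (sup [set normX theta (seg theta (fun r => h0 (phi xi u r)) tau)
                              | tau in `[0, t]]))
                 (gamma (fine (normM u))))).
Proof.
move=> theta_gt0 _ _ h0_cont _ x_sol alpha_ge0 _ _ betaKL [_ [rho_ge0 _]] kappaN _ y_bound.
exists (delayKL beta theta); split; first exact: classKL_delayKL.
move=> xi u xiX uM u_fin t t0.
have [xi_cont _] := xiX.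
have [x_cont [x_init _]] := x_sol xi u xiX uM.
pose y tau := vnorm (h0 (phi xi u tau)).
have y_cont : {within `[- theta, +oo[, continuous y}.
  have := @within_continuous_comp _ _ _ _ (phi xi u) (fun v => vnorm (h0 v))
    (fun v _ => continuous_comp (h0_cont v) (continuous_vnorm (x:=h0 v))) x_cont.
  exact.
have H_xi : normX theta (fun s => h0 (xi s)) = sup_itv y (- theta) 0.
  rewrite /normX /sup_itv; congr sup; apply: eq_imagel => s.
  by rewrite /= in_itv => s_in; rewrite /y x_init.
have -> : (fun tau => normX theta (seg theta (fun r => h0 (phi xi u r)) tau)) =
          (fun tau => sup_itv y (tau - theta) tau).
  by apply: funext => tau; rewrite normX_seg.
rewrite normX_seg H_xi.
apply: (sup_seg_le_delayKL (fun v => vnorm_ge0 _) y_cont (y_bound xi u xiX uM u_fin)) => //.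
- exact: ltW.
- by rewrite lerDl rho_ge0 // normX_ge0 // ltW.
- by rewrite alpha_ge0 // le_max lexx.
- by rewrite le_max lexx orbT.
Qed.
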